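(* Along a $C^1$ curve $z(s)$ with tangent $v^\mu$ in a Lorentzian 4-manifold, let $p^\mu(s)$, antisymmetric $S^{\mu\nu}(s)$, a timelike unit vector $u^\mu(s)$ and a scalar $M(s)>0$ be differentiable, with $p^\mu=Mu^\mu$, $p_\nu S^{\mu\nu}=0$ and $u_\kappa v^\kappa=-1$. Define $F^\nu$ and $L^{\kappa\lambda}$ by $$F^\nu=\frac{\delta p^\nu}{\delta s}-\tfrac12 S^{\kappa\lambda}v^\mu R_{\kappa\lambda\mu}{}^{\nu},\qquad L^{\kappa\lambda}=\frac{\delta S^{\kappa\lambda}}{\delta s}-2p^{[\kappa}v^{\lambda]},$$ and assume $M^2+\tfrac14 S^{\kappa\lambda}S^{\tau\nu}R_{\kappa\lambda\tau\nu}\neq0$. Then $$Mv^\mu=p^\mu-u_\nu L^{\mu\nu}-\frac{S^{\mu\nu}\Big[MF_\nu-\tfrac12 S^{\kappa\lambda}\big(p^\tau-u_\sigma L^{\tau\sigma}\big)R_{\kappa\lambda\nu\tau}\Big]}{M^2+\tfrac14 S^{\kappa\lambda}S^{\tau\nu}R_{\kappa\lambda\tau\nu}} .$$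
   Context: $\delta/\delta s=v^\mu\nabla_\mu$; $R_{\kappa\lambda\mu\nu}$ is the Riemann tensor with the algebraic symmetries $R_{\kappa\lambda\mu\nu}=-R_{\lambda\kappa\mu\nu}=-R_{\kappa\lambda\nu\mu}=R_{\mu\nu\kappa\lambda}$ and $R_{\kappa[\lambda\mu\nu]}=0$; indices lowered with the metric; $A^{[\kappa}B^{\lambda]}=\tfrac12(A^\kappa B^\lambda-A^\lambda B^\kappa)$. *)

From Stdlib Require Import Reals.
Open Scope R_scope.

(* Spacetime indices are natural numbers 0..3; only indices < 4 matter. *)
Definition sum4 (f : nat -> R) : R := f 0%nat + f 1%nat + f 2%nat + f 3%nat.

Definition eta (a b : nat) : R :=
  if Nat.eqb a b then (if Nat.eqb a 0 then -1 else 1) else 0.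

Definition kdelta (a b : nat) : R := if Nat.eqb a b then 1 else 0.

(* A Lorentzian metric (signature -+++) at a point: symmetric components
   admitting an orthonormal frame. *)
Definition lorentzian (g : nat -> nat -> R) : Prop :=
  (forall m n, (m < 4)%nat -> (n < 4)%nat -> g m n = g n m) /\
  exists e : nat -> nat -> R,
    forall a b, (a < 4)%nat -> (b < 4)%nat ->
      sum4 (fun m => sum4 (fun n => g m n * e a m * e b n)) = eta a b.

Definition inverse_metric (g ginv : nat -> nat -> R) : Prop :=
  forall m n, (m < 4)%nat -> (n < 4)%nat ->
    sum4 (fun r => g m r * ginv r n) = kdelta m n.

Definition lower (g : nat -> nat -> R) (x : nat -> R) (n : nat) : R :=
  sum4 (fun r => g n r * x r).

(* Algebraic symmetries of the (all-lower-index) Riemann tensor. *)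
Definition riemann_symmetries (Rm : nat -> nat -> nat -> nat -> R) : Prop :=
  forall k l m n, (k < 4)%nat -> (l < 4)%nat -> (m < 4)%nat -> (n < 4)%nat ->
    Rm k l m n = - Rm l k m n /\
    Rm k l m n = - Rm k l n m /\
    Rm k l m n = Rm m n k l /\
    Rm k l m n + Rm k m n l + Rm k n l m = 0.

(* Covariant derivative along the curve (tangent v), in coordinates, with
   connection coefficients Gam n a b = Gamma^n_{ab}:
   delta x^n/ds = dx^n/ds + Gamma^n_{ab} v^a x^b. *)
Definition cov_vec (Gam : nat -> nat -> nat -> R) (v x dx : nat -> R)
    (n : nat) : R :=
  dx n + sum4 (fun a => sum4 (fun b => Gam n a b * v a * x b)).

Definition cov_bivec (Gam : nat -> nat -> nat -> R) (v : nat -> R)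
    (S dS : nat -> nat -> R) (k l : nat) : R :=
  dS k l
  + sum4 (fun a => sum4 (fun b => Gam k a b * v a * S b l))
  + sum4 (fun a => sum4 (fun b => Gam l a b * v a * S k b)).

Definition forceF (Gam : nat -> nat -> nat -> R) (ginv : nat -> nat -> R)
    (Rm : nat -> nat -> nat -> nat -> R) (v p dp : nat -> R)
    (S : nat -> nat -> R) (n : nat) : R :=
  cov_vec Gam v p dp n
  - / 2 * sum4 (fun k => sum4 (fun l => sum4 (fun m =>
        S k l * v m * sum4 (fun r => Rm k l m r * ginv r n)))).

Definition torqueL (Gam : nat -> nat -> nat -> R) (v p : nat -> R)
    (S dS : nat -> nat -> R) (k l : nat) : R :=
  cov_bivec Gam v S dS k l - (p k * v l - p l * v k).

From Stdlib Require Import Reals Lia Lra.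
From mathcomp Require all_boot all_algebra Rstruct.
Open Scope R_scope.

(* Put Y^m = u_n delta S^{mn}/ds.  Since u.v = -1 and p = M u, the combination
   p^m - u_n L^{mn} equals M v^m - Y^m, so the claim is an explicit formula for Y.
   Differentiating the constraint p_n S^{mn} = 0 along the curve gives
   M Y^m = - S^{mn} (delta p/ds)_n, and delta p/ds is F plus the curvature force.
   The same constraint makes p_n a nonzero kernel vector of S, so the Pfaffian of S
   vanishes; for such a degenerate bivector S Q S = 1/2 tr(S Q^T) S for every
   antisymmetric Q.  With Q_{tn} = S^{kl} R_{kltn} this turns the relation into
   (M^2 + 1/4 S S R) Y^m = - S^{mn} [M F_n - 1/2 S^{kl} (M v - Y)^t R_{klnt}],
   which is solved by dividing by the nonzero factor. *)

Lemma sum4_ext (f h : nat -> R) :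
  (forall n, (n < 4)%nat -> f n = h n) -> sum4 f = sum4 h.
Proof. intro H; unfold sum4; rewrite !H by lia; reflexivity. Qed.

Ltac case_index i :=
  assert (i = 0 \/ i = 1 \/ i = 2 \/ i = 3)%nat as [-> | [-> | [-> | ->]]] by lia.

Lemma sum4_kdelta (f : nat -> R) n : (n < 4)%nat -> sum4 (fun q => f q * kdelta q n) = f n.
Proof. intro Hn; case_index n; unfold sum4, kdelta; simpl; ring. Qed.

Module MetricInverse.
Import all_boot all_algebra Rstruct GRing.Theory.
Local Open Scope ring_scope.

Definition mx4 (f : nat -> nat -> R) : 'M[R]_4 := \matrix_(i < 4, j < 4) f i j.

Lemma mx4_mulE (f h : nat -> nat -> R) (i j : 'I_4) :
  (mx4 f *m mx4 h) i j = sum4 (fun r => Rmult (f i r) (h r j)).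
Proof. by rewrite mxE !big_ord_recr big_ord0 /= !mxE add0r. Qed.

Lemma mx4_kdelta : mx4 kdelta = 1%:M.
Proof.
apply/matrixP => i j; rewrite !mxE /kdelta.
by case: Nat.eqb_spec => [/val_inj -> | ne]; rewrite ?eqxx //; case: eqP => // /(congr1 val).
Qed.

Lemma inverse_metric_left (g gi : nat -> nat -> R) :
  inverse_metric g gi -> forall m n, (m < 4)%coq_nat -> (n < 4)%coq_nat ->
  sum4 (fun r => Rmult (gi m r) (g r n)) = kdelta m n.
Proof.
move=> ggi m n /ltP m4 /ltP n4.
have ggiE : mx4 g *m mx4 gi = 1%:M.
  by apply/matrixP => i j; rewrite -mx4_kdelta mx4_mulE ggi ?mxE //; apply/ltP.
have /matrixP/(_ (Ordinal m4) (Ordinal n4)) := mulmx1C ggiE.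
by rewrite mx4_mulE -mx4_kdelta mxE.
Qed.
End MetricInverse.

Definition antisym (S : nat -> nat -> R) : Prop :=
  forall i j, (i < 4)%nat -> (j < 4)%nat -> S i j = - S j i.

Lemma antisym_diag (S : nat -> nat -> R) i :
  antisym S -> (i < 4)%nat -> S i i = 0.
Proof. intros HS Hi; pose proof (HS i i Hi Hi); lra. Qed.

Ltac antisym_normalize S HS :=
  rewrite ?(antisym_diag S _ HS) by lia;
  rewrite ?(HS 1 0)%nat, ?(HS 2 0)%nat, ?(HS 3 0)%nat,
    ?(HS 2 1)%nat, ?(HS 3 1)%nat, ?(HS 3 2)%nat by lia.

Definition pfaffian (S : nat -> nat -> R) : R :=
  S 0%nat 1%nat * S 2%nat 3%nat - S 0%nat 2%nat * S 1%nat 3%nat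
  + S 0%nat 3%nat * S 1%nat 2%nat.

(* [bivector_dual Q m n = 1/2 eps_{mnab} Q a b], with the Levi-Civita symbol eps_{0123} = 1;
   no metric is involved. *)
Definition bivector_dual (Q : nat -> nat -> R) (m n : nat) : R :=
  match m, n with
  | 0, 1 => Q 2%nat 3%nat | 0, 2 => - Q 1%nat 3%nat | 0, 3 => Q 1%nat 2%nat
  | 1, 0 => - Q 2%nat 3%nat | 2, 0 => Q 1%nat 3%nat | 3, 0 => - Q 1%nat 2%nat
  | 1, 2 => Q 0%nat 3%nat | 1, 3 => - Q 0%nat 2%nat | 2, 3 => Q 0%nat 1%nat
  | 2, 1 => - Q 0%nat 3%nat | 3, 1 => Q 0%nat 2%nat | 3, 2 => - Q 0%nat 1%nat
  | _, _ => 0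
  end.

Lemma bivector_dual_mul (S : nat -> nat -> R) :
  antisym S -> forall b n, (b < 4)%nat -> (n < 4)%nat ->
  sum4 (fun m => bivector_dual S b m * S m n) = - pfaffian S * kdelta b n.
Proof.
  intros HS b n Hb Hn.
  case_index b; case_index n; unfold sum4, pfaffian, kdelta; cbn [bivector_dual Nat.eqb];
    antisym_normalize S HS; ring.
Qed.

Lemma pfaffian_eq0_of_kernel (S : nat -> nat -> R) (q : nat -> R) :
  antisym S ->
  (forall m, (m < 4)%nat -> sum4 (fun n => q n * S m n) = 0) ->
  (exists n, (n < 4)%nat /\ q n <> 0) -> pfaffian S = 0.
Proof.
  intros HS Hq [b [Hb Hqb]].
  apply (Rmult_eq_reg_r (q b)); [|exact Hqb].
  transitivity (- sum4 (fun n => sum4 (fun m => bivector_dual S b m * S m n) * q n)).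
  - rewrite (sum4_ext _ (fun n => - pfaffian S * kdelta b n * q n))
      by (intros n Hn; rewrite bivector_dual_mul by assumption; reflexivity).
    case_index b; unfold sum4, kdelta; simpl; ring.
  - transitivity (- sum4 (fun m => bivector_dual S b m * sum4 (fun n => q n * S m n)));
      [unfold sum4; ring|].
    rewrite (sum4_ext _ (fun _ => 0)) by (intros m Hm; rewrite Hq by assumption; ring).
    unfold sum4; ring.
Qed.

Lemma antisym_sandwich (S Q : nat -> nat -> R) :
  antisym S -> antisym Q -> forall m b, (m < 4)%nat -> (b < 4)%nat ->
  sum4 (fun n => sum4 (fun t => S m n * Q t n * S t b)) =
  / 2 * sum4 (fun t => sum4 (fun n => S t n * Q t n)) * S m b
  - pfaffian S * bivector_dual Q m b.
Proof.
  intros HS HQ m b Hm Hb.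
  case_index m; case_index b; unfold sum4, pfaffian; cbn [bivector_dual];
    antisym_normalize S HS; antisym_normalize Q HQ; field.
Qed.

Lemma lower_scale (G : nat -> nat -> R) (p u : nat -> R) (c : R) :
  (forall m, (m < 4)%nat -> p m = c * u m) -> forall n, lower G p n = c * lower G u n.
Proof.
  intros Hpu n; unfold lower.
  rewrite (sum4_ext _ (fun r => c * (G n r * u r))) by (intros r Hr; rewrite Hpu by lia; ring).
  unfold sum4; ring.
Qed.

Lemma lower_nonzero_of_timelike (G : nat -> nat -> R) (u : nat -> R) :
  sum4 (fun m => lower G u m * u m) = -1 -> exists n, (n < 4)%nat /\ lower G u n <> 0.
Proof.
  intro Hu.
  destruct (Req_dec (lower G u 0) 0) as [h0|]; [|exists 0%nat; split; [lia | assumption]].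
  destruct (Req_dec (lower G u 1) 0) as [h1|]; [|exists 1%nat; split; [lia | assumption]].
  destruct (Req_dec (lower G u 2) 0) as [h2|]; [|exists 2%nat; split; [lia | assumption]].
  destruct (Req_dec (lower G u 3) 0) as [h3|]; [|exists 3%nat; split; [lia | assumption]].
  unfold sum4 in Hu; rewrite h0, h1, h2, h3 in Hu; lra.
Qed.

Definition spin_rate (G : nat -> nat -> R) (Gam : nat -> nat -> nat -> R)
    (v u : nat -> R) (S dS : nat -> nat -> R) (m : nat) : R :=
  sum4 (fun n => lower G u n * cov_bivec Gam v S dS m n).

Definition spin_curvature (Rm : nat -> nat -> nat -> nat -> R) (S : nat -> nat -> R)
    (t n : nat) : R :=
  sum4 (fun k => sum4 (fun l => S k l * Rm k l t n)).

Lemma spin_rate_solve (S Q : nat -> nat -> R) (v Y Z Fl : nat -> R) (Mm : R) :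
  antisym S -> antisym Q -> pfaffian S = 0 -> Mm <> 0 ->
  (forall m, (m < 4)%nat -> Mm * Y m = - sum4 (fun n => S m n * Z n)) ->
  (forall n, (n < 4)%nat -> Fl n = Z n - / 2 * sum4 (fun t => v t * Q t n)) ->
  Mm ^ 2 + / 4 * sum4 (fun t => sum4 (fun n => S t n * Q t n)) <> 0 ->
  forall m, (m < 4)%nat ->
  Mm * v m = Mm * v m - Y m
    - sum4 (fun n => S m n * (Mm * Fl n + / 2 * sum4 (fun t => (Mm * v t - Y t) * Q t n)))
      / (Mm ^ 2 + / 4 * sum4 (fun t => sum4 (fun n => S t n * Q t n))).
Proof.
  intros HS HQ HPf HM HY HF Hden m Hm.
  set (K := sum4 (fun t => sum4 (fun n => S t n * Q t n))) in *.
  assert (HSZ : sum4 (fun n => S m n * Z n) = - (Mm * Y m)) by (rewrite HY by exact Hm; ring).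
  assert (HSQY : sum4 (fun n => sum4 (fun t => S m n * Q t n * Y t)) = / 2 * K * Y m).
  { apply (Rmult_eq_reg_l Mm); [|exact HM].
    transitivity (sum4 (fun n => sum4 (fun t => S m n * Q t n * (Mm * Y t))));
      [unfold sum4; ring|].
    rewrite (sum4_ext _ (fun n => sum4 (fun t => S m n * Q t n * - sum4 (fun b => S t b * Z b))))
      by (intros n Hn; apply sum4_ext; intros t Ht; rewrite HY by exact Ht; reflexivity).
    transitivity (- sum4 (fun b => sum4 (fun n => sum4 (fun t => S m n * Q t n * S t b)) * Z b));
      [unfold sum4; ring|].
    rewrite (sum4_ext _ (fun b => / 2 * K * (S m b * Z b)))
      by (intros b Hb; rewrite antisym_sandwich, HPf by assumption; unfold K; ring).
    transitivity (/ 2 * K * - sum4 (fun b => S m b * Z b)); [unfold sum4; ring|].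
    rewrite HSZ; ring. }
  assert (Hnum : sum4 (fun n => S m n * (Mm * Fl n + / 2 * sum4 (fun t => (Mm * v t - Y t) * Q t n)))
                 = - (Mm ^ 2 + / 4 * K) * Y m).
  { rewrite (sum4_ext _ (fun n => S m n * (Mm * Z n) - / 2 * sum4 (fun t => S m n * Q t n * Y t)))
      by (intros n Hn; rewrite HF by exact Hn; unfold sum4; ring).
    transitivity (Mm * sum4 (fun n => S m n * Z n)
                  - / 2 * sum4 (fun n => sum4 (fun t => S m n * Q t n * Y t)));
      [unfold sum4; ring|].
    rewrite HSZ, HSQY; field. }
  rewrite Hnum; field; contradict Hden; lra.
Qed.

Section PointRelations.

Variables (G Gi dG : nat -> nat -> R) (Gam : nat -> nat -> nat -> R)
  (Rm : nat -> nat -> nat -> nat -> R) (v p dp u : nat -> R) (S dS : nat -> nat -> R)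
  (Mm : R).

Hypothesis HGsym : forall m n, (m < 4)%nat -> (n < 4)%nat -> G m n = G n m.
Hypothesis HGi : inverse_metric G Gi.
Hypothesis HdG : forall m n, (m < 4)%nat -> (n < 4)%nat ->
  dG m n = sum4 (fun a => sum4 (fun r => v a * (Gam r a m * G r n + Gam r a n * G m r))).
Hypothesis HRm : forall k l m n, (k < 4)%nat -> (l < 4)%nat -> (m < 4)%nat -> (n < 4)%nat ->
  Rm k l m n = - Rm k l n m.
Hypothesis HS : antisym S.
Hypothesis HM : 0 < Mm.
Hypothesis Hu : sum4 (fun m => lower G u m * u m) = -1.
Hypothesis Hpu : forall m, (m < 4)%nat -> p m = Mm * u m.
Hypothesis HpS : forall m, (m < 4)%nat -> sum4 (fun n => lower G p n * S m n) = 0.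
Hypothesis Huv : sum4 (fun k => lower G u k * v k) = -1.
(* [d/ds (g_{nr} p^r S^{mn}) = 0]: the constraint [p_n S^{mn} = 0] differentiated
   along the curve. *)
Hypothesis Hder : forall m, (m < 4)%nat ->
  sum4 (fun n => sum4 (fun r => dG n r * p r + G n r * dp r) * S m n
                 + lower G p n * dS m n) = 0.
Hypothesis Hden : Mm ^ 2 + / 4 * sum4 (fun k => sum4 (fun l => sum4 (fun t => sum4 (fun n =>
  S k l * S t n * Rm k l t n)))) <> 0.

Lemma torque_contraction t :
  p t - sum4 (fun n => lower G u n * torqueL Gam v p S dS t n)
  = Mm * v t - spin_rate G Gam v u S dS t.
Proof.
  assert (Hup : sum4 (fun n => lower G u n * p n) = - Mm).
  { rewrite (sum4_ext _ (fun n => Mm * (lower G u n * u n)))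
      by (intros n Hn; rewrite Hpu by lia; ring).
    transitivity (Mm * sum4 (fun n => lower G u n * u n)); [unfold sum4; ring|].
    rewrite Hu; ring. }
  transitivity (p t - (spin_rate G Gam v u S dS t - p t * sum4 (fun k => lower G u k * v k)
                       + v t * sum4 (fun n => lower G u n * p n))).
  - unfold spin_rate, torqueL; generalize (lower G u); intro w; unfold sum4; ring.
  - rewrite Hup, Huv; ring.
Qed.

Lemma lower_cov_vec n : (n < 4)%nat ->
  lower G (cov_vec Gam v p dp) n
  = sum4 (fun r => dG n r * p r + G n r * dp r)
    - sum4 (fun a => sum4 (fun c => Gam c a n * v a * lower G p c)).
Proof.
  intro Hn.
  rewrite (sum4_ext (fun r => dG n r * p r + _)
             (fun r => sum4 (fun a => sum4 (fun c =>
                 v a * (Gam c a n * G c r + Gam c a r * G n c))) * p r + G n r * dp r))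
    by (intros r Hr; rewrite HdG by lia; reflexivity).
  unfold cov_vec, lower, sum4; lra.
Qed.

(* The connection term acting on the free index [m] is the last summand; it vanishes
   by the constraint [p_n S^{bn} = 0]. *)
Lemma cov_contraction_leibniz m :
  sum4 (fun n => lower G (cov_vec Gam v p dp) n * S m n
                 + lower G p n * cov_bivec Gam v S dS m n)
  = sum4 (fun n => sum4 (fun r => dG n r * p r + G n r * dp r) * S m n
                   + lower G p n * dS m n)
    + sum4 (fun a => sum4 (fun b => Gam m a b * v a * sum4 (fun n => lower G p n * S b n))).
Proof.
  rewrite (sum4_ext (fun n => lower G (cov_vec Gam v p dp) n * S m n + _)
             (fun n => (sum4 (fun r => dG n r * p r + G n r * dp r)
                        - sum4 (fun a => sum4 (fun c => Gam c a n * v a * lower G p c))) * S m n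
                       + lower G p n * cov_bivec Gam v S dS m n))
    by (intros n Hn; rewrite lower_cov_vec by exact Hn; reflexivity).
  generalize (lower G p) (fun n => sum4 (fun r => dG n r * p r + G n r * dp r)).
  intros P X; unfold cov_bivec, sum4; lra.
Qed.

Lemma spin_rate_transport m : (m < 4)%nat ->
  Mm * spin_rate G Gam v u S dS m = - sum4 (fun n => S m n * lower G (cov_vec Gam v p dp) n).
Proof.
  intro Hm.
  assert (Hconn : sum4 (fun a => sum4 (fun b =>
            Gam m a b * v a * sum4 (fun n => lower G p n * S b n))) = 0).
  { rewrite (sum4_ext _ (fun _ => 0)); [unfold sum4; ring|].
    intros a Ha; rewrite (sum4_ext _ (fun _ => 0)); [unfold sum4; ring|].
    intros b Hb; rewrite HpS by lia; ring. }
  pose proof (cov_contraction_leibniz m) as Hleib.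
  rewrite Hder, Hconn in Hleib by exact Hm.
  transitivity (sum4 (fun n => lower G p n * cov_bivec Gam v S dS m n)).
  - rewrite (sum4_ext (fun n => lower G p n * _)
               (fun n => Mm * (lower G u n * cov_bivec Gam v S dS m n)))
      by (intros n Hn; rewrite (lower_scale G p u Mm Hpu); ring).
    unfold spin_rate, sum4; ring.
  - revert Hleib; unfold sum4; lra.
Qed.

Lemma lower_forceF n : (n < 4)%nat ->
  lower G (forceF Gam Gi Rm v p dp S) n
  = lower G (cov_vec Gam v p dp) n - / 2 * sum4 (fun t => v t * spin_curvature Rm S t n).
Proof.
  intro Hn.
  set (T q := sum4 (fun k => sum4 (fun l => sum4 (fun t => S k l * v t * Rm k l t q)))).
  assert (HF : forall r, forceF Gam Gi Rm v p dp S r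
                         = cov_vec Gam v p dp r - / 2 * sum4 (fun q => T q * Gi q r))
    by (intro r; unfold forceF, T, sum4; lra).
  transitivity (lower G (cov_vec Gam v p dp) n
                - / 2 * sum4 (fun q => T q * sum4 (fun r => Gi q r * G r n))).
  - rewrite (sum4_ext (fun q => T q * _) (fun q => T q * sum4 (fun r => G n r * Gi q r)))
      by (intros q Hq; f_equal; apply sum4_ext; intros r Hr; rewrite HGsym by lia; ring).
    unfold lower; rewrite (sum4_ext (fun r => G n r * _)
      (fun r => G n r * (cov_vec Gam v p dp r - / 2 * sum4 (fun q => T q * Gi q r))))
      by (intros r Hr; rewrite HF; reflexivity).
    clearbody T; generalize (cov_vec Gam v p dp); intro C; unfold sum4; ring.
  - rewrite (sum4_ext _ (fun q => T q * kdelta q n))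
      by (intros q Hq; rewrite (MetricInverse.inverse_metric_left G Gi HGi) by lia; reflexivity).
    rewrite sum4_kdelta by exact Hn.
    unfold T, spin_curvature, sum4; ring.
Qed.

Lemma spin_curvature_antisym : antisym (spin_curvature Rm S).
Proof.
  intros t n Ht Hn; unfold spin_curvature.
  rewrite (sum4_ext _ (fun k => sum4 (fun l => - (S k l * Rm k l n t)))).
  - unfold sum4; ring.
  - intros k Hk; apply sum4_ext; intros l Hl; rewrite HRm by lia; ring.
Qed.

Lemma spin_curvature_contract (W : nat -> R) n : (n < 4)%nat ->
  sum4 (fun k => sum4 (fun l => S k l * sum4 (fun t => W t * Rm k l n t)))
  = - sum4 (fun t => W t * spin_curvature Rm S t n).
Proof.
  intro Hn.
  rewrite (sum4_ext _ (fun k => sum4 (fun l => S k l * sum4 (fun t => W t * - Rm k l t n)))).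
  - unfold spin_curvature, sum4; lra.
  - intros k Hk; apply sum4_ext; intros l Hl; f_equal.
    apply sum4_ext; intros t Ht; rewrite HRm by lia; reflexivity.
Qed.

Lemma mass_velocity_relation m : (m < 4)%nat ->
    let F := forceF Gam Gi Rm v p dp S in
    let L := torqueL Gam v p S dS in
    let ul := lower G u in
    let Fl := lower G F in
    Mm * v m =
      p m - sum4 (fun n => ul n * L m n)
      - sum4 (fun n => S m n *
            (Mm * Fl n
             - / 2 * sum4 (fun k => sum4 (fun l => S k l *
                 sum4 (fun t => (p t - sum4 (fun sg => ul sg * L t sg))
                                * Rm k l n t)))))
        / (Mm ^ 2 + / 4 * sum4 (fun k => sum4 (fun l => sum4 (fun t => sum4 (fun n =>
             S k l * S t n * Rm k l t n))))).
Proof.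
  intro Hm; cbv zeta.
  set (Y := spin_rate G Gam v u S dS).
  set (Q := spin_curvature Rm S).
  assert (HD : Mm ^ 2 + / 4 * sum4 (fun k => sum4 (fun l => sum4 (fun t => sum4 (fun n =>
                 S k l * S t n * Rm k l t n))))
               = Mm ^ 2 + / 4 * sum4 (fun t => sum4 (fun n => S t n * Q t n)))
    by (unfold Q, spin_curvature, sum4; lra).
  assert (HPf : pfaffian S = 0).
  { apply (pfaffian_eq0_of_kernel S (lower G p) HS HpS).
    destruct (lower_nonzero_of_timelike G u Hu) as [n [Hn Hun]].
    exists n; split; [exact Hn|].
    rewrite (lower_scale G p u Mm Hpu); apply Rmult_integral_contrapositive; split; lra. }
  rewrite torque_contraction, HD.
  rewrite (sum4_ext (fun n => S m n * _)
             (fun n => S m n * (Mm * lower G (forceF Gam Gi Rm v p dp S) n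
                                + / 2 * sum4 (fun t => (Mm * v t - Y t) * Q t n)))).
  - apply (spin_rate_solve S Q v Y (lower G (cov_vec Gam v p dp))).
    + exact HS.
    + exact spin_curvature_antisym.
    + exact HPf.
    + lra.
    + exact spin_rate_transport.
    + exact lower_forceF.
    + rewrite <- HD; exact Hden.
    + exact Hm.
  - intros n Hn; rewrite spin_curvature_contract by exact Hn.
    rewrite (sum4_ext (fun t => (p t - _) * Q t n) (fun t => (Mm * v t - Y t) * Q t n))
      by (intros t Ht; rewrite torque_contraction; reflexivity).
    ring.
Qed.

End PointRelations.

Lemma derivable_pt_lim_sum4 (f : nat -> R -> R) (df : nat -> R) s :
  (forall n, (n < 4)%nat -> derivable_pt_lim (f n) s (df n)) ->
  derivable_pt_lim (fun t => sum4 (fun n => f n t)) s (sum4 df).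
Proof.
  intro Hf; unfold sum4.
  repeat apply derivable_pt_lim_plus; apply Hf; lia.
Qed.

Lemma derivable_pt_lim_zero_on (f : R -> R) a b s :
  (forall t, a < t < b -> f t = 0) -> a < s < b -> derivable_pt_lim f s 0.
Proof.
  intros Hf Hs.
  apply (derivable_pt_lim_locally_ext (fun _ => 0) f s a b 0 Hs).
  - intros t Ht; symmetry; exact (Hf t Ht).
  - apply derivable_pt_lim_const.
Qed.

Theorem mainTheorem9
  (a0 b0 : R)
  (z v : R -> nat -> R)
  (g ginv dg : R -> nat -> nat -> R)
  (Gam : R -> nat -> nat -> nat -> R)
  (Riem : R -> nat -> nat -> nat -> nat -> R)
  (p dp u : R -> nat -> R)
  (S dS : R -> nat -> nat -> R)
  (M : R -> R)
  (Hz : forall s m, a0 < s < b0 -> (m < 4)%nat ->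
          derivable_pt_lim (fun t => z t m) s (v s m))
  (Hvc : forall s m, a0 < s < b0 -> (m < 4)%nat ->
          continuity_pt (fun t => v t m) s)
  (Hg : forall s, a0 < s < b0 -> lorentzian (g s))
  (Hginv : forall s, a0 < s < b0 -> inverse_metric (g s) (ginv s))
  (Hdg : forall s m n, a0 < s < b0 -> (m < 4)%nat -> (n < 4)%nat ->
          derivable_pt_lim (fun t => g t m n) s (dg s m n))
  (HGsym : forall s r a b, a0 < s < b0 -> (r < 4)%nat -> (a < 4)%nat -> (b < 4)%nat ->
          Gam s r a b = Gam s r b a)
  (HGcompat : forall s m n, a0 < s < b0 -> (m < 4)%nat -> (n < 4)%nat ->
          dg s m n = sum4 (fun a => sum4 (fun r =>
             v s a * (Gam s r a m * g s r n + Gam s r a n * g s m r))))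
  (HR : forall s, a0 < s < b0 -> riemann_symmetries (Riem s))
  (Hdp : forall s m, a0 < s < b0 -> (m < 4)%nat ->
          derivable_pt_lim (fun t => p t m) s (dp s m))
  (HS : forall s m n, a0 < s < b0 -> (m < 4)%nat -> (n < 4)%nat ->
          S s m n = - S s n m)
  (HdS : forall s m n, a0 < s < b0 -> (m < 4)%nat -> (n < 4)%nat ->
          derivable_pt_lim (fun t => S t m n) s (dS s m n))
  (Hdu : forall s m, a0 < s < b0 -> (m < 4)%nat ->
          exists l, derivable_pt_lim (fun t => u t m) s l)
  (HdM : forall s, a0 < s < b0 -> exists l, derivable_pt_lim M s l)
  (HM : forall s, a0 < s < b0 -> 0 < M s)
  (Hu : forall s, a0 < s < b0 -> sum4 (fun m => lower (g s) (u s) m * u s m) = -1)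
  (Hpu : forall s m, a0 < s < b0 -> (m < 4)%nat -> p s m = M s * u s m)
  (HpS : forall s m, a0 < s < b0 -> (m < 4)%nat ->
          sum4 (fun n => lower (g s) (p s) n * S s m n) = 0)
  (Huv : forall s, a0 < s < b0 -> sum4 (fun k => lower (g s) (u s) k * v s k) = -1)
  (Hden : forall s, a0 < s < b0 ->
          M s ^ 2 + / 4 * sum4 (fun k => sum4 (fun l => sum4 (fun t => sum4 (fun n =>
             S s k l * S s t n * Riem s k l t n)))) <> 0) :
  forall s m, a0 < s < b0 -> (m < 4)%nat ->
    let F := forceF (Gam s) (ginv s) (Riem s) (v s) (p s) (dp s) (S s) in
    let L := torqueL (Gam s) (v s) (p s) (S s) (dS s) in
    let ul := lower (g s) (u s) in
    let Fl := lower (g s) F in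
    M s * v s m =
      p s m - sum4 (fun n => ul n * L m n)
      - sum4 (fun n => S s m n *
            (M s * Fl n
             - / 2 * sum4 (fun k => sum4 (fun l => S s k l *
                 sum4 (fun t => (p s t - sum4 (fun sg => ul sg * L t sg))
                                * Riem s k l n t)))))
        / (M s ^ 2 + / 4 * sum4 (fun k => sum4 (fun l => sum4 (fun t => sum4 (fun n =>
             S s k l * S s t n * Riem s k l t n))))).
Proof.
  intros s m Hs Hm.
  assert (Hder : forall m0, (m0 < 4)%nat ->
            sum4 (fun n => sum4 (fun r => dg s n r * p s r + g s n r * dp s r) * S s m0 n
                           + lower (g s) (p s) n * dS s m0 n) = 0).
  { intros m0 Hm0.
    apply (uniqueness_limite (fun t => sum4 (fun n => lower (g t) (p t) n * S t m0 n)) s).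
    - apply (derivable_pt_lim_sum4 (fun n t => lower (g t) (p t) n * S t m0 n)); intros n Hn.
      apply (derivable_pt_lim_mult (fun t => lower (g t) (p t) n) (fun t => S t m0 n));
        [|apply HdS; assumption].
      apply (derivable_pt_lim_sum4 (fun r t => g t n r * p t r)); intros r Hr.
      apply (derivable_pt_lim_mult (fun t => g t n r) (fun t => p t r));
        [apply Hdg | apply Hdp]; assumption.
    - apply (derivable_pt_lim_zero_on _ a0 b0); [|exact Hs].
      intros t Ht; exact (HpS t m0 Ht Hm0). }
  apply (mass_velocity_relation (g s) (ginv s) (dg s) (Gam s) (Riem s)
           (v s) (p s) (dp s) (u s) (S s) (dS s) (M s)); auto.
  - exact (proj1 (Hg s Hs)).
  - intros k l m0 n Hk Hl Hm0 Hn; exact (proj1 (proj2 (HR s Hs k l m0 n Hk Hl Hm0 Hn))).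
  - intros i j Hi Hj; exact (HS s i j Hs Hi Hj).
Qed.
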